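(* Let $N$ be a unitarily invariant norm on $M_n$ normalized so that $N(E_{11})=1$, and let $D$ be a positive definite diagonal matrix. Then $$I(N,D)=N'(D^{-1})^{-1},$$ where $N'$ is the dual norm of $N$.
   Context: $M_n$ is the set of complex $n\times n$ matrices, $P(n)$ the positive semidefinite ones, $\circ$ the Hadamard product, $E_{11}$ the matrix unit with a $1$ in position $(1,1)$ and zeros elsewhere. $I(N,A)=\min\{N(A\circ B): B\in P(n),\ N(B)=1\}$. The dual norm is $N'(X)=\max\{|\operatorname{tr}(X Y^* )|: N(Y)\le1\}$; equivalently, if $\Phi$ is the symmetric gauge function with $N(X)=\Phi(s_1(X),\dots,s_n(X))$ (singular values), $N'$ corresponds to the dual gauge function $\Phi'$. *)

From HB Require Import structures.
From mathcomp Require Import all_boot all_order all_algebra.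
From mathcomp Require Import classical_sets reals.
From mathcomp Require Import complex.
Set Implicit Arguments. Unset Strict Implicit. Unset Printing Implicit Defensive.
Import Order.TTheory GRing.Theory Num.Theory.
Local Open Scope ring_scope.
Local Open Scope classical_set_scope.

Definition cabs {R : realType} (z : R[i]) : R := ComplexField.Normc.normc z.

Definition adjmx {R : realType} m n (X : 'M[R[i]]_(m, n)) : 'M[R[i]]_(n, m) :=
  \matrix_(i, j) Num.conj (X j i).

Definition unitarymx {R : realType} n (U : 'M[R[i]]_n) : Prop :=
  U *m adjmx U = 1%:M.

Definition psdmx {R : realType} n (B : 'M[R[i]]_n) : Prop :=
  adjmx B = B /\ forall x : 'cV[R[i]]_n, 0 <= (adjmx x *m B *m x) 0 0.

Definition hadamard {R : realType} n (A B : 'M[R[i]]_n) : 'M[R[i]]_n :=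
  \matrix_(i, j) (A i j * B i j).

Definition is_matrix_norm {R : realType} n (N : 'M[R[i]]_n -> R) : Prop :=
  [/\ forall A, 0 <= N A,
      forall A, N A = 0 -> A = 0,
      forall (c : R[i]) A, N (c *: A) = cabs c * N A &
      forall A B, N (A + B) <= N A + N B].

Definition unitarily_invariant_norm {R : realType} n (N : 'M[R[i]]_n -> R) : Prop :=
  is_matrix_norm N /\
  forall U V A, unitarymx U -> unitarymx V -> N (U *m A *m V) = N A.

(* I(N,A) = min { N(A o B) : B in P(n), N(B) = 1 }, taken as the infimum
   (attainment is asserted separately in the theorem). *)
Definition Iset {R : realType} n (N : 'M[R[i]]_n -> R) (A : 'M[R[i]]_n) : set R :=
  [set N (hadamard A B) | B in [set B | psdmx B /\ N B = 1]].

Definition Inorm {R : realType} n (N : 'M[R[i]]_n -> R) (A : 'M[R[i]]_n) : R :=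
  inf (Iset N A).

Definition dual_norm {R : realType} n (N : 'M[R[i]]_n -> R) (X : 'M[R[i]]_n) : R :=
  sup [set cabs (\tr (X *m adjmx Y)) | Y in [set Y | N Y <= 1]].

From Pilot Require Import Defs.
From HB Require Import structures.
From mathcomp Require Import all_boot all_order all_algebra.
From mathcomp Require Import classical_sets reals.
From mathcomp Require Import complex fingroup perm.
From mathcomp Require Import topology normedtype derive.
From mathcomp Require Import ring lra.
Import Order.TTheory GRing.Theory Num.Theory Num.Def.
Set Implicit Arguments. Unset Strict Implicit. Unset Printing Implicit Defensive.
Local Open Scope ring_scope.

(* Both sides equal m := min { N (D diag p) : p in the probability simplex }.
   For psd B, tr (D^-1 (D o B)^* ) is the conjugate of tr B and N B <= tr B, so the
   duality inequality |tr (X Y^* )| <= N Y N'(X) gives N B <= N (D o B) N'(D^-1); hence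
   I(N, D) >= 1 / N'(D^-1).  Conversely, if N Y <= 1 then |tr (D^-1 Y^* )| <= s :=
   sum_i |Y_ii| / d_i, and the point (|Y_ii| / (d_i s))_i of the simplex together with
   the pinching inequality N (diag Y) <= N Y shows m <= 1 / s; so N'(D^-1) <= 1 / m.
   The minimum is attained at some p by compactness, and B = v v^* with v_i = sqrt p_i
   is a rank-one projection, so N B = N E11 = 1 while N (D o B) = m. *)

Section ComplexAbs.
Variable R : realType.
Implicit Types (x : R) (z w : R[i]).

Lemma cabsE z : ((cabs z)%:C)%C = `|z|.
Proof. by []. Qed.

Lemma cabs_ge0 z : 0 <= cabs z.
Proof. by rewrite -lecR cabsE; exact: normr_ge0. Qed.

Lemma cabsM z w : cabs (z * w) = cabs z * cabs w.
Proof. by apply: (@complexI R); rewrite rmorphM /= !cabsE normrM. Qed.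

Lemma cabs_sum (I : finType) (F : I -> R[i]) :
  cabs (\sum_i F i) <= \sum_i cabs (F i).
Proof. by rewrite -lecR rmorph_sum cabsE; exact: ler_norm_sum. Qed.

Lemma cabsR x : cabs ((x%:C)%C) = `|x|.
Proof.
apply: (@complexI R); rewrite cabsE; case: (lerP 0 x) => x0.
  by rewrite !ger0_norm // ler0c.
by rewrite !ltr0_norm ?rmorphN // ltcR.
Qed.

Lemma cabsV z : cabs z^-1 = (cabs z)^-1.
Proof. by apply: (@complexI R); rewrite fmorphV /= !cabsE normfV. Qed.

Lemma cabsN1 : cabs (-1 : R[i]) = 1.
Proof. by apply: (@complexI R); rewrite cabsE normrN1. Qed.

Lemma cabs_nat k : cabs (k%:R : R[i]) = k%:R.
Proof. by rewrite -(rmorph_nat (real_complex R)) cabsR ger0_norm. Qed.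

Lemma cabs0 : cabs (0 : R[i]) = 0.
Proof. exact: (cabs_nat 0). Qed.

Lemma conj_real_complex x : ((x%:C)%C)^* = (x%:C)%C.
Proof. exact: conjc_real. Qed.

Lemma cabsJ z : cabs z^* = cabs z.
Proof. by apply: (@complexI R); rewrite !cabsE norm_conjC. Qed.

Lemma ge0_cabsE z : 0 <= z -> ((cabs z)%:C)%C = z.
Proof. by move=> z0; rewrite cabsE ger0_norm. Qed.

End ComplexAbs.

Section Adjoint.
Variable R : realType.
Local Notation C := R[i].

Lemma adjmxE m k (X : 'M[C]_(m, k)) : adjmx X = map_mx conjC X^T.
Proof. by apply/matrixP=> i j; rewrite !mxE. Qed.

Lemma adjmx_mul m k l (A : 'M[C]_(m, k)) (B : 'M[C]_(k, l)) :
  adjmx (A *m B) = adjmx B *m adjmx A.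
Proof. by rewrite !adjmxE trmx_mul map_mxM. Qed.

Lemma adjmxK m k (A : 'M[C]_(m, k)) : adjmx (adjmx A) = A.
Proof. by apply/matrixP => i j; rewrite !mxE conjCK. Qed.

Lemma adjmxZ m k a (X : 'M[C]_(m, k)) : adjmx (a *: X) = a^* *: adjmx X.
Proof. by apply/matrixP => i j; rewrite !mxE rmorphM. Qed.

Lemma unitaryE m (U : 'M[C]_m) : Defs.unitarymx U <-> U \is spectral.unitarymx.
Proof. by rewrite /Defs.unitarymx adjmxE; split=> [/unitarymxP|/unitarymxP]. Qed.

Lemma unitary_adjl m (U : 'M[C]_m) : Defs.unitarymx U -> adjmx U *m U = 1%:M.
Proof.
move/unitaryE => UU; rewrite adjmxE -spectral.invmx_unitary //.
by rewrite mulVmx // spectral.unitarymx_unit.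
Qed.

Lemma unitary_adj m (U : 'M[C]_m) : Defs.unitarymx U -> Defs.unitarymx (adjmx U).
Proof. by move=> UU; rewrite /Defs.unitarymx adjmxK unitary_adjl. Qed.

Lemma unitary_perm m (s : 'S_m) : Defs.unitarymx (perm_mx s : 'M[C]_m).
Proof.
rewrite /Defs.unitarymx adjmxE -map_trmx map_perm_mx tr_perm_mx -perm_mxM mulgV.
exact: perm_mx1.
Qed.

Lemma unitary1 m : Defs.unitarymx (1%:M : 'M[C]_m).
Proof. by rewrite -perm_mx1; apply: unitary_perm. Qed.

Lemma unitary_diag m (u : 'rV[C]_m) :
  (forall i, `|u 0 i| = 1) -> Defs.unitarymx (diag_mx u).
Proof.
move=> u1; rewrite /Defs.unitarymx; apply/matrixP=> i j.
rewrite mul_diag_mx !mxE; case: (eqVneq i j) => [->|_].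
  by rewrite !mulr1n -normCK u1 expr1n.
by rewrite !mulr0n rmorph0 mulr0.
Qed.

Lemma unitary_sign m (f : 'I_m -> bool) :
  Defs.unitarymx (diag_mx (\row_k (-1) ^+ f k) : 'M[C]_m).
Proof. by apply: unitary_diag => k; rewrite mxE normrX normrN1 expr1n. Qed.

Lemma hermitian_spectral m (B : 'M[C]_m) : adjmx B = B ->
  exists P d, [/\ Defs.unitarymx P, B = adjmx P *m diag_mx d *m P
                & diag_mx d = P *m B *m adjmx P].
Proof.
move=> HB.
have nB : B \is spectral.normalmx by apply/spectral.normalmxP; rewrite -adjmxE HB.
have := spectral.orthomx_spectralP nB.
set P := spectral.spectralmx B; set d := spectral.spectral_diag B.
have UP : P \is spectral.unitarymx := spectral.spectral_unitarymx B.
rewrite spectral.invmx_unitary // -adjmxE => eB.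
have UP' : Defs.unitarymx P by apply/unitaryE.
exists P, d; split => //.
by rewrite {1}eB !mulmxA UP' mul1mx -mulmxA UP' mulmx1.
Qed.

Lemma psdmx_diag m (B : 'M[C]_m) i : psdmx B -> 0 <= B i i.
Proof.
move=> [_ HB]; have := HB (delta_mx i 0).
have -> : adjmx (delta_mx i 0 : 'cV[C]_m) = delta_mx 0 i.
  by apply/matrixP => a b; rewrite !mxE rmorph_nat andbC.
by rewrite -rowE -colE !mxE.
Qed.

Lemma psdmx_trace_ge0 m (B : 'M[C]_m) : psdmx B -> 0 <= \tr B.
Proof. by move=> HB; apply: sumr_ge0 => i _; apply: psdmx_diag. Qed.

Lemma psdmx_congr m (B Q : 'M[C]_m) : psdmx B -> psdmx (Q *m B *m adjmx Q).
Proof.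
move=> [HB1 HB2]; split; first by rewrite !adjmx_mul adjmxK HB1 mulmxA.
by move=> x; have := HB2 (adjmx Q *m x); rewrite adjmx_mul adjmxK !mulmxA.
Qed.

Lemma psdmx_outer m (v : 'cV[C]_m) : psdmx (v *m adjmx v).
Proof.
split=> [|x]; first by rewrite adjmx_mul adjmxK.
rewrite !mulmxA -(mulmxA _ _ x).
have -> : adjmx v *m x = adjmx (adjmx x *m v) by rewrite adjmx_mul adjmxK.
by rewrite !mxE big_ord1 !mxE mul_conjC_ge0.
Qed.

End Adjoint.

Lemma mulmx_perm_mxE (C : pzRingType) m (s t : 'S_m) (A : 'M[C]_m) i j :
  (perm_mx s *m A *m perm_mx t) i j = A (s i) ((t^-1)%g j).
Proof.
rewrite -row_permE -[perm_mx t](congr1 perm_mx (invgK t)) -col_permE.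
by rewrite !mxE.
Qed.

Lemma sum_sign_ffun_neq (C : numFieldType) m (i j : 'I_m) : i != j ->
  \sum_(f : {ffun 'I_m -> bool}) (-1) ^+ f i * (-1) ^+ f j = 0 :> C.
Proof.
move=> ij; set s := \sum_f _.
pose flip (f : {ffun 'I_m -> bool}) := [ffun k => if k == i then ~~ f k else f k].
have flipK : involutive flip.
  by move=> f; apply/ffunP => k; rewrite !ffunE; case: eqP => // _; rewrite negbK.
have : s = - s.
  rewrite {1}/s (reindex_inj (inv_inj flipK)) -sumrN; apply: eq_bigr => f _.
  by rewrite !ffunE eqxx eq_sym (negbTE ij) signrN mulNr.
by move/eqP; rewrite -subr_eq0 opprK -mulr2n mulrn_eq0 => /eqP.
Qed.

Section UnitarilyInvariantNorm.
Variables (R : realType) (n : nat) (N : 'M[R[i]]_n.+1 -> R).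
Hypothesis HN : unitarily_invariant_norm N.
Local Notation C := R[i].
Local Notation M := 'M[R[i]]_n.+1.

Lemma N_ge0 A : 0 <= N A. Proof. by case: HN => -[+ _ _ _] _; apply. Qed.
Lemma N_eq0 A : N A = 0 -> A = 0. Proof. by case: HN => -[_ + _ _] _; apply. Qed.
Lemma N_scale c A : N (c *: A) = cabs c * N A. Proof. by case: HN => -[_ _ + _] _; apply. Qed.
Lemma N_triangle A B : N (A + B) <= N A + N B. Proof. by case: HN => -[_ _ _ +] _; apply. Qed.

Lemma N_unitary U V A :
  Defs.unitarymx U -> Defs.unitarymx V -> N (U *m A *m V) = N A.
Proof. by case: HN => _; apply. Qed.

Lemma N_unitaryl U A : Defs.unitarymx U -> N (U *m A) = N A.
Proof. by move=> UU; rewrite -[U *m A]mulmx1 N_unitary //; exact: unitary1. Qed.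

Lemma N_unitaryr A V : Defs.unitarymx V -> N (A *m V) = N A.
Proof. by move=> UV; rewrite -{1}[A]mul1mx N_unitary //; exact: unitary1. Qed.

Lemma N0 : N 0 = 0.
Proof. by rewrite -(scale0r (0 : M)) N_scale cabs0 mul0r. Qed.

Lemma N_opp A : N (- A) = N A.
Proof. by rewrite -scaleN1r N_scale cabsN1 mul1r. Qed.

Lemma N_dist A B : `|N A - N B| <= N (A - B).
Proof.
have AB := N_triangle B (A - B); have BA := N_triangle A (B - A).
rewrite addrC subrK in AB; rewrite addrC subrK -opprB N_opp in BA.
by rewrite ler_norml; apply/andP; split; lra.
Qed.

Lemma N_sum (I : Type) (r : seq I) (P : pred I) (F : I -> M) :
  N (\sum_(i <- r | P i) F i) <= \sum_(i <- r | P i) N (F i).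
Proof.
elim/big_rec2: _ => [|i y1 y2 _ Hy]; first by rewrite N0.
by apply: le_trans (N_triangle _ _) _; rewrite lerD2l.
Qed.

Lemma N_sum_unitary (I : finType) (U V : I -> M) (Y : M) :
  (forall k, Defs.unitarymx (U k)) -> (forall k, Defs.unitarymx (V k)) ->
  N (\sum_k U k *m Y *m V k) <= #|I|%:R * N Y.
Proof.
move=> UU UV; apply: le_trans (N_sum _ _ _) _.
by rewrite (eq_bigr (fun=> N Y)) ?sumr_const ?mulr_natl // => k _; rewrite N_unitary.
Qed.

Hypothesis HE : N (delta_mx 0 0) = 1.

Lemma N_delta (i j : 'I_n.+1) : N (delta_mx i j) = 1.
Proof.
rewrite -HE -(N_unitary _ (unitary_perm _ (tperm i 0)) (unitary_perm _ (tperm 0 j))).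
congr N; apply/matrixP=> a b; rewrite mulmx_perm_mxE !mxE.
by rewrite !(can2_eq (permK _) (permKV _)) !tpermV tpermR tpermL.
Qed.

Lemma N_diag_le_sum (y : 'rV[C]_n.+1) : N (diag_mx y) <= \sum_i cabs (y 0 i).
Proof.
rewrite diag_mx_sum_delta; apply: le_trans (N_sum _ _ _) _.
by apply: ler_sum => i _; rewrite N_scale N_delta mulr1.
Qed.

Lemma N_pinch (Y : M) : N (diag_mx (\row_i Y i i)) <= N Y.
Proof.
pose T := {ffun 'I_n.+1 -> bool}.
pose S (f : T) : M := diag_mx (\row_k (-1) ^+ f k).
have avg : \sum_f S f *m Y *m S f = #|T|%:R *: diag_mx (\row_i Y i i).
  apply/matrixP => i j; rewrite summxE !mxE.
  under eq_bigr => f _ do rewrite mul_mx_diag mul_diag_mx !mxE mulrAC.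
  case: (eqVneq i j) => [<-|ij] /=; last first.
    by rewrite -mulr_suml sum_sign_ffun_neq // mul0r mulr0n mulr0.
  rewrite mulr1n (eq_bigr (fun=> Y i i)) => [|f _]; last first.
    by rewrite -expr2 sqrr_sign mul1r.
  by rewrite sumr_const mulr_natl.
have := @N_sum_unitary T S S Y (fun f => unitary_sign _ f) (fun f => unitary_sign _ f).
rewrite avg N_scale cabs_nat; have T0 : (0 : R) < #|T|%:R.
  by rewrite ltr0n; apply/card_gt0P; exists [ffun=> false].
by rewrite ler_pM2l.
Qed.

Lemma cabs_diag_le (y : 'rV[C]_n.+1) i : cabs (y 0 i) <= N (diag_mx y).
Proof.
pose S : M := diag_mx (\row_k (-1) ^+ (k != i)).
have two : (y 0 i *+ 2) *: delta_mx i i = diag_mx y + S *m diag_mx y.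
  apply/matrixP => a b; rewrite mul_diag_mx !mxE.
  case: (eqVneq a i) => [->|ai] /=; last by rewrite mulr0 expr1 mulN1r subrr.
  by rewrite expr0 mul1r -mulrnDr [i == b]eq_sym; case: (b == i); rewrite ?mulr1 ?mulr0.
have := N_triangle (diag_mx y) (S *m diag_mx y).
rewrite -two N_scale N_delta N_unitaryl; last exact: unitary_sign.
by rewrite -mulr_natr cabsM cabs_nat mulr1 -mulr2n mulr_natr ler_pMn2r.
Qed.

Lemma cabs_entry_le (Y : M) i j : cabs (Y i j) <= N Y.
Proof.
set Z := perm_mx (tperm i j) *m Y.
have -> : Y i j = Z j j by rewrite /Z -row_permE mxE tpermR.
rewrite -(N_unitaryl Y (unitary_perm _ (tperm i j))) -/Z.
by apply: le_trans (N_pinch Z); have := cabs_diag_le (\row_k Z k k) j; rewrite mxE.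
Qed.

Lemma N_diag_eq_norm (y z : 'rV[C]_n.+1) :
  (forall i, `|y 0 i| = `|z 0 i|) -> N (diag_mx y) = N (diag_mx z).
Proof.
move=> yz; pose u := \row_i (if z 0 i == 0 then 1 else y 0 i / z 0 i).
have Uu : Defs.unitarymx (diag_mx u).
  apply: unitary_diag => i; rewrite mxE; case: eqP => [_|/eqP zi]; first exact: normr1.
  by rewrite normf_div yz divff // normr_eq0.
rewrite -(N_unitaryr (diag_mx z) Uu); congr N; apply/matrixP => i j.
rewrite mul_diag_mx !mxE; case: (eqVneq i j) => [->|_]; last by rewrite !mulr0n mulr0.
rewrite !mulr1n; case: eqP => [zj|/eqP zj]; last by rewrite [z 0 j * _]mulrC divfK.
by move/eqP: (yz j); rewrite zj normr0 normr_eq0 => /eqP->; rewrite mul0r.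
Qed.

Lemma N_psd_le_trace (B : M) : psdmx B -> ((N B)%:C)%C <= \tr B.
Proof.
move=> psdB; have [P [e [UP eB eD]]] := hermitian_spectral psdB.1.
have e_ge0 i : 0 <= e 0 i.
  by have := psdmx_diag i (psdmx_congr P psdB); rewrite -eD mxE eqxx mulr1n.
have -> : N B = N (diag_mx e) by rewrite eB N_unitary //; exact: unitary_adj.
have -> : \tr B = \sum_i e 0 i.
  by rewrite -mxtrace_diag eB mxtrace_mulC mulmxA (UP : P *m adjmx P = 1%:M) mul1mx.
rewrite -(eq_bigr _ (fun i _ => ge0_cabsE (e_ge0 i))) -rmorph_sum lecR.
exact: N_diag_le_sum.
Qed.

Lemma cabs_trace_ge1 (B : M) : psdmx B -> N B = 1 -> 1 <= cabs (\tr B).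
Proof. by move=> psdB NB; rewrite -lecR ge0_cabsE ?psdmx_trace_ge0 // -NB N_psd_le_trace. Qed.

Lemma N_trace1_projection (B : M) :
  psdmx B -> B *m B = B -> \tr B = 1 -> N B = 1.
Proof.
move=> psdB BB trB; apply/le_anti/andP; split.
  by rewrite -lecR rmorph1 -trB N_psd_le_trace.
have [P [e [UP eB eD]]] := hermitian_spectral psdB.1.
have ee : diag_mx e *m diag_mx e = diag_mx e.
  rewrite eD !mulmxA -(mulmxA (P *m B)) unitary_adjl // mulmx1.
  by rewrite -(mulmxA P B) BB.
have tre : \sum_i e 0 i = 1.
  by rewrite -mxtrace_diag eD mxtrace_mulC mulmxA unitary_adjl // mul1mx.
have [k ek] : exists k, e 0 k != 0.
  case: (pickP (fun k => e 0 k != 0)) => [k ek|e0]; first by exists k.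
  by move: tre; rewrite big1 => [/esym/eqP|i _]; [rewrite oner_eq0 | exact/eqP/negbFE/e0].
have ek1 : e 0 k = 1.
  have /eqP := congr1 (fun X : M => X k k) ee.
  by rewrite mul_diag_mx !mxE eqxx mulr1n -{3}[e 0 k]mulr1 (inj_eq (mulfI ek)) => /eqP.
have -> : N B = N (diag_mx e) by rewrite eB N_unitary //; exact: unitary_adj.
by have := cabs_diag_le e k; rewrite ek1 (cabs_nat _ 1).
Qed.

Lemma N_outer_isometry (v : 'cV[C]_n.+1) :
  adjmx v *m v = 1%:M -> N (v *m adjmx v) = 1.
Proof.
move=> vv; apply: N_trace1_projection; first exact: psdmx_outer.
  by rewrite mulmxA -(mulmxA v) vv mulmx1.
by rewrite mxtrace_mulC vv mxtrace1.
Qed.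

Lemma psdmx_norm1_with_diag (p : 'rV[R]_n.+1) :
  (forall i, 0 <= p 0 i) -> \sum_i p 0 i = 1 ->
  exists B : M, [/\ psdmx B, N B = 1 & forall i, B i i = ((p 0 i)%:C)%C].
Proof.
move=> p_ge0 p1; pose v : 'cV[C]_n.+1 := \col_i ((Num.sqrt (p 0 i))%:C)%C.
have vv i j : (v i j)^* * v i j = ((p 0 i)%:C)%C.
  by rewrite mxE conj_real_complex -rmorphM -expr2 sqr_sqrtr.
exists (v *m adjmx v); split; first exact: psdmx_outer.
  apply: N_outer_isometry; apply/matrixP => a b; rewrite !ord1 !mxE /=.
  rewrite -(rmorph1 (real_complex R)) -p1 rmorph_sum; apply: eq_bigr => i _.
  by rewrite mxE vv.
by move=> i; rewrite !mxE big_ord1 [adjmx _ _ _]mxE mulrC vv.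
Qed.

Lemma has_sup_dual (X : M) :
  has_sup [set cabs (\tr (X *m adjmx Y)) | Y in [set Y : M | N Y <= 1]].
Proof.
split; first by exists (cabs (\tr (X *m adjmx 0))), 0; rewrite //= N0.
exists (\sum_i \sum_j cabs (X i j)) => _ [Y NY <-].
apply: le_trans (cabs_sum _) _; apply: ler_sum => i _.
rewrite mxE; apply: le_trans (cabs_sum _) _; apply: ler_sum => j _.
rewrite mxE cabsM cabsJ; apply: ler_piMr (cabs_ge0 _) _.
exact: le_trans (cabs_entry_le _ _ _) NY.
Qed.

Lemma dual_norm_ge (X Y : M) :
  N Y <= 1 -> cabs (\tr (X *m adjmx Y)) <= dual_norm N X.
Proof. by move=> NY; apply: sup_upper_bound (has_sup_dual X) _ _; exists Y. Qed.

Lemma dual_norm_le (X : M) c :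
  (forall Y, N Y <= 1 -> cabs (\tr (X *m adjmx Y)) <= c) -> dual_norm N X <= c.
Proof. by move=> ub; apply: ge_sup (has_sup_dual X).1 _ => _ [Y /ub le <-]. Qed.

Lemma dual_norm_ge0 (X : M) : 0 <= dual_norm N X.
Proof. by apply: le_trans (cabs_ge0 _) (dual_norm_ge X (Y := 0) _); rewrite N0. Qed.

Lemma cabs_trace_le_dual (X Y : M) :
  cabs (\tr (X *m adjmx Y)) <= N Y * dual_norm N X.
Proof.
have [/N_eq0 ->|NY0] := eqVneq (N Y) 0.
  rewrite N0 mul0r (_ : adjmx 0 = 0) ?mulmx0 ?mxtrace0 ?cabs0 //.
  by apply/matrixP => i j; rewrite !mxE rmorph0.
have c_gt0 : 0 < (N Y)^-1 by rewrite invr_gt0 lt0r NY0 N_ge0.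
have := dual_norm_ge X (Y := (((N Y)^-1)%:C)%C *: Y).
rewrite N_scale cabsR gtr0_norm // mulVf // lexx => /(_ isT).
rewrite adjmxZ conj_real_complex -scalemxAr mxtraceZ cabsM cabsR gtr0_norm //.
by move=> h; rewrite -(ler_pM2l c_gt0) mulrA mulVf ?mul1r.
Qed.

End UnitarilyInvariantNorm.

Import numFieldNormedType.Exports.
Local Open Scope classical_set_scope.

Section Simplex.
Variable R : realType.

Definition simplex k : set 'rV[R]_k :=
  [set p | (forall i, 0 <= p 0 i) /\ \sum_i p 0 i = 1].

Lemma coord_le_norm k (v : 'rV[R]_k) i : `|v 0 i| <= `|v|.
Proof.
rewrite [leRHS]/normr /= mx_normrE.
by apply/boolp.bigmax_geP; right => /=; exists (0, i).
Qed.

Lemma lipschitz_continuous (V W : normedModType R) (f : V -> W) (K : R) :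
  (forall x y, `|f x - f y| <= K * `|x - y|) -> continuous f.
Proof.
move=> Hf x; apply/(@cvgrPdist_lt _ _ _ (nbhs x) (nbhs_filter x)) => e e0.
have K1_gt0 : 0 < `|K| + 1 by rewrite ltr_wpDl.
have := @cvgr_dist_lt _ _ _ (nbhs x) (nbhs_filter x) id x (@cvg_id _ (nbhs x))
  _ (divr_gt0 e0 K1_gt0).
apply: filterS => y /= xy; apply: le_lt_trans (Hf x y) _.
rewrite ltr_pdivlMr // mulrC in xy; apply: le_lt_trans xy.
by apply: ler_wpM2r => //; rewrite (le_trans (ler_norm K)) // lerDl.
Qed.

Lemma simplex_compact k : compact (@simplex k).
Proof.
apply: bounded_closed_compact.
  exists 1; split => // r r1 p [p_ge0 p1]; apply: le_trans (ltW r1).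
  rewrite /normr /= mx_normrE; apply/bigmax_leP; split => // -[a b] _ /=.
  by rewrite ord1 ger0_norm // -p1 (bigD1 b) //= lerDl sumr_ge0.
have -> : @simplex k = \bigcap_(i in setT) [set p | 0 <= p 0 i] `&`
                      [set p | \sum_i p 0 i = 1].
  by apply/seteqP; split => p /= [p_ge0 p1]; split => // i *; apply: p_ge0.
apply: closedI.
  apply: closed_bigI => i _.
  apply: (@preimage_closed _ _ (fun p : 'rV[R]_k => p 0 i) _ _ (@closed_ge R 0)).
  by move=> p _; apply: coord_continuous.
apply: (@preimage_closed _ _ (fun p : 'rV[R]_k => \sum_i p 0 i) _ _ (@closed_eq R 1)).
move=> p _.
apply: (@lipschitz_continuous _ _ _ k%:R) => a b.
rewrite -sumrB; apply: le_trans (ler_norm_sum _ _ _) _.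
apply: le_trans (_ : \sum_(i < k) `|a - b| <= _); last first.
  by rewrite sumr_const card_ord mulr_natl.
by apply: ler_sum => i _; have := coord_le_norm (a - b) i; rewrite !mxE.
Qed.

End Simplex.

Lemma invmx_diag (F : fieldType) m (d : 'rV[F]_m) :
  (forall i, d 0 i != 0) -> invmx (diag_mx d) = diag_mx (\row_i (d 0 i)^-1).
Proof.
move=> d_neq0; have dV : diag_mx d *m diag_mx (\row_i (d 0 i)^-1) = 1%:M.
  apply/matrixP => i j; rewrite mul_diag_mx !mxE.
  by case: (eqVneq i j) => [->|_]; rewrite ?mulr1n ?divff // !mulr0n mulr0.
have [dU _] := mulmx1_unit dV.
by rewrite -[LHS]mulmx1 -dV mulmxA mulVmx // mul1mx.
Qed.

Lemma hadamard_diag (R : realType) m (d : 'rV[R[i]]_m) (B : 'M[R[i]]_m) :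
  hadamard (diag_mx d) B = diag_mx (\row_i (d 0 i * B i i)).
Proof.
apply/matrixP => i j; rewrite !mxE.
by case: (eqVneq i j) => [->|_]; rewrite ?mulr1n // !mulr0n mul0r.
Qed.

Lemma Inorm_eq_min (R : realType) m (N : 'M[R[i]]_m -> R) (A B : 'M[R[i]]_m) :
  psdmx B -> N B = 1 ->
  (forall B', psdmx B' -> N B' = 1 -> N (hadamard A B) <= N (hadamard A B')) ->
  Inorm N A = N (hadamard A B).
Proof.
move=> psdB NB Bmin; have IB : Iset N A (N (hadamard A B)) by exists B.
apply/le_anti/andP; split.
  by apply: ge_inf IB; exists (N (hadamard A B)) => _ [B' [psdB' NB'] <-]; apply: Bmin.
by apply: lb_le_inf; [exists (N (hadamard A B)) | move=> _ [B' [psdB' NB'] <-]; apply: Bmin].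
Qed.

Section DiagonalCase.
Variables (R : realType) (n : nat) (N : 'M[R[i]]_n.+1 -> R) (d : 'rV[R[i]]_n.+1).
Hypotheses (HN : unitarily_invariant_norm N) (HE : N (delta_mx 0 0) = 1).
Hypothesis d_gt0 : forall i, 0 < d 0 i.
Local Notation M := 'M[R[i]]_n.+1.
Local Notation D := (diag_mx d).

Definition scaled_diag (w : 'rV[R]_n.+1) : M := diag_mx (\row_i (d 0 i * ((w 0 i)%:C)%C)).

Let d_neq0 i : d 0 i != 0. Proof. exact: lt0r_neq0. Qed.

Let conj_d i : (d 0 i)^* = d 0 i.
Proof. by rewrite -(ge0_cabsE (ltW (d_gt0 i))) conj_real_complex. Qed.

Lemma trace_inv_adj_hadamard B : \tr (invmx D *m adjmx (hadamard D B)) = (\tr B)^*.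
Proof.
rewrite invmx_diag // hadamard_diag rmorph_sum; apply: eq_bigr => i _.
by rewrite mul_diag_mx !mxE eqxx !mulr1n rmorphM /= conj_d mulKf.
Qed.

Lemma cabs_trace_le_hadamard B :
  cabs (\tr B) <= N (hadamard D B) * dual_norm N (invmx D).
Proof. by rewrite -cabsJ -trace_inv_adj_hadamard; exact: cabs_trace_le_dual. Qed.

Lemma inv_dual_le_hadamard B :
  psdmx B -> N B = 1 -> (dual_norm N (invmx D))^-1 <= N (hadamard D B).
Proof.
move=> psdB NB; have := le_trans (cabs_trace_ge1 HN HE psdB NB) (cabs_trace_le_hadamard B).
have [->|dual_neq0] := eqVneq (dual_norm N (invmx D)) 0; first by rewrite mulr0 ler10.
have dual_gt0 : 0 < dual_norm N (invmx D) by rewrite lt0r dual_neq0 dual_norm_ge0.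
by rewrite -ler_pdivrMr // mul1r.
Qed.

Lemma scaled_diagB p q : scaled_diag p - scaled_diag q = scaled_diag (p - q).
Proof. by apply/matrixP => i j; rewrite !mxE -mulrnBl rmorphB mulrBr. Qed.

Lemma N_scaled_diag_continuous : continuous (fun w => N (scaled_diag w)).
Proof.
apply: (@lipschitz_continuous _ _ _ _ (\sum_i cabs (d 0 i))) => p q.
apply: le_trans (N_dist HN _ _) _; rewrite scaled_diagB.
apply: le_trans (N_diag_le_sum HN HE _) _; rewrite mulr_suml.
apply: ler_sum => i _; rewrite !mxE cabsM cabsR; apply: ler_wpM2l; first exact: cabs_ge0.
by have := coord_le_norm (p - q) i; rewrite !mxE.
Qed.

Lemma scaled_diag_min_exists :
  exists2 p, simplex p & forall q, simplex q -> N (scaled_diag p) <= N (scaled_diag q).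
Proof.
have S0 : @simplex R n.+1 !=set0.
  exists (\row_i (i == 0)%:R); split => [i|]; first by rewrite mxE ler0n.
  by rewrite (bigD1 0) //= big1 => [|i /negbTE]; rewrite mxE ?eqxx ?addr0 // => ->.
have [p /set_mem Sp pmin] := EVT_min_rV S0 (@simplex_compact R n.+1)
  (continuous_subspaceT N_scaled_diag_continuous).
by exists p => // q Sq; apply: pmin; apply/mem_set.
Qed.

Lemma N_scaled_diag_gt0 p : simplex p -> 0 < N (scaled_diag p).
Proof.
move=> [_ p1]; rewrite lt0r N_ge0 // andbT; apply/eqP => /(N_eq0 HN) sd0.
move: p1; rewrite big1 => [/esym/eqP|i _]; first by rewrite oner_eq0.
have /eqP := congr1 (fun X : M => X i i) sd0.
by rewrite !mxE eqxx mulr1n mulf_eq0 (negbTE (d_neq0 i)) => /eqP/complexI.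
Qed.

Lemma dual_norm_le_inv_min p :
  simplex p -> (forall q, simplex q -> N (scaled_diag p) <= N (scaled_diag q)) ->
  dual_norm N (invmx D) <= (N (scaled_diag p))^-1.
Proof.
move=> Sp pmin; apply: (dual_norm_le HN HE) => Y NY.
set s := \sum_i cabs (Y i i) / cabs (d 0 i).
have tr_le : cabs (\tr (invmx D *m adjmx Y)) <= s.
  rewrite invmx_diag //; apply: le_trans (cabs_sum _) _; apply: ler_sum => i _.
  by rewrite mul_diag_mx !mxE cabsM cabsJ cabsV mulrC.
apply: le_trans tr_le _; have [->|s_neq0] := eqVneq s 0.
  by rewrite invr_ge0 N_ge0.
have s_gt0 : 0 < s.
  rewrite lt0r s_neq0 sumr_ge0 // => i _.
  by rewrite divr_ge0 ?cabs_ge0.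
pose q := \row_i (cabs (Y i i) / cabs (d 0 i) / s).
have Sq : simplex q.
  split=> [i|]; first by rewrite mxE !divr_ge0 ?cabs_ge0 ?ltW.
  by under eq_bigr => i _ do rewrite mxE; rewrite -mulr_suml divff.
have Nq : N (scaled_diag q) = s^-1 * N (diag_mx (\row_i Y i i)).
  have sV_ge0 : 0 <= s^-1 by rewrite invr_ge0 ltW.
  rewrite -(ger0_norm sV_ge0) -cabsR -N_scale //.
  have -> : ((s^-1)%:C)%C *: diag_mx (\row_i Y i i) =
            diag_mx (\row_i (((s^-1)%:C)%C * Y i i)).
    by apply/matrixP => i j; rewrite !mxE mulrnAr.
  apply: N_diag_eq_norm => // i; rewrite !mxE -!cabsE; congr ((_ %:C)%C).
  have di : cabs (d 0 i) != 0 by rewrite -(inj_eq (@complexI R)) cabsE normr_eq0.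
  rewrite !cabsM !cabsR (ger0_norm sV_ge0) ger0_norm; last first.
    by rewrite !divr_ge0 ?cabs_ge0 ?ltW.
  by field; rewrite s_neq0 di.
have : N (scaled_diag p) <= s^-1.
  apply: le_trans (pmin q Sq) _; rewrite Nq; apply: ler_piMr; first by rewrite invr_ge0 ltW.
  exact: le_trans (N_pinch HN Y) NY.
by rewrite -[s in _ -> s <= _]invrK lef_pV2 // ?posrE ?invr_gt0 ?N_scaled_diag_gt0.
Qed.

End DiagonalCase.

Local Close Scope classical_set_scope.

Theorem proposition5p3 (R : realType) (n : nat)
  (N : 'M[R[i]]_n.+1 -> R) (d : 'rV[R[i]]_n.+1) :
  unitarily_invariant_norm N ->
  N (delta_mx 0 0) = 1 ->
  (forall i, 0 < d 0 i) ->
  Inorm N (diag_mx d) = (dual_norm N (invmx (diag_mx d)))^-1 /\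
  (exists B : 'M[R[i]]_n.+1,
      [/\ psdmx B, N B = 1 & N (hadamard (diag_mx d) B) = Inorm N (diag_mx d)]).
Proof.
move=> HN HE d_gt0; set D := diag_mx d; set dual := dual_norm N (invmx D).
have [p Sp pmin] := scaled_diag_min_exists d HN HE.
have m_gt0 := N_scaled_diag_gt0 HN d_gt0 Sp.
have [B [psdB NB Bp]] := psdmx_norm1_with_diag HN HE Sp.1 Sp.2.
have DB : N (hadamard D B) = N (scaled_diag d p).
  by congr N; rewrite hadamard_diag; congr diag_mx; apply/rowP => i; rewrite !mxE Bp.
have dual_eq : dual = (N (scaled_diag d p))^-1.
  apply/le_anti/andP; split; first exact: dual_norm_le_inv_min.
  rewrite -(ler_pM2l m_gt0) mulfV ?gt_eqF // -DB.
  exact: le_trans (cabs_trace_ge1 HN HE psdB NB) (cabs_trace_le_hadamard HN HE d_gt0 B).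
have I_eq : Inorm N D = N (hadamard D B).
  apply: Inorm_eq_min => // B' psdB' NB'.
  by rewrite DB -[N _]invrK -dual_eq; exact: inv_dual_le_hadamard.
split; first by rewrite I_eq DB dual_eq invrK.
by exists B; split; rewrite ?I_eq.
Qed.
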